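(* If a learning dynamic over $n$ actions is finitely passive (resp. finitely lossless), then for any mixed strategy $\mathbf{x}^*\in\Delta^n$, its learning operator with shift $\mathbf{x}^*$ is finitely passive (resp. finitely lossless).
   Context: $\Delta^n=\{\mathbf{x}\in\mathbb{R}^n: x_j\ge 0,\ \sum_j x_j=1\}$; $\mathbf{e}_j$ is the $j$-th standard basis vector. A learning dynamic over $n$ actions is specified by a conversion function $f:\mathbb{R}^n\to\Delta^n$: given an initial state $\mathbf{q}^0\in\mathbb{R}^n$ and an input function $\mathbf{p}:[0,\infty)\to\mathbb{R}^n$ square integrable on bounded intervals, the state is $\mathbf{q}(t)=\mathbf{q}^0+\int_0^t\mathbf{p}(\tau)\,d\tau$ and the strategy is $\mathbf{x}(t)=f(\mathbf{q}(t))$. The learning operator with shift $\mathbf{x}^*\in\mathbb{R}^n$ has state $\mathbf{q}$, input $\mathbf{p}$, output $\mathbf{x}-\mathbf{x}^*$; it is passive via a storage function $L:\mathbb{R}^n\to\mathbb{R}$ if for every $\mathbf{q}^0$, every $\mathbf{p}$ and every $t\ge0$, $L(\mathbf{q}(t))\le L(\mathbf{q}^0)+\int_0^t\langle\mathbf{p}(\tau),\mathbf{x}(\tau)-\mathbf{x}^*\rangle\,d\tau$, lossless if equality always holds, and finitely passive (resp. finitely lossless) if it is passive (resp. lossless) via a storage function that is bounded from below. A learning dynamic is finitely passive (resp. finitely lossless) if for every action $j$ its learning operator with shift $\mathbf{e}_j$ is finitely passive (resp. finitely lossless). *)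

From HB Require Import structures.
From mathcomp Require Import all_boot all_order all_algebra.
From mathcomp Require Import all_classical all_reals all_analysis.
Set Implicit Arguments. Unset Strict Implicit. Unset Printing Implicit Defensive.
Import Order.TTheory GRing.Theory Num.Theory.
Import numFieldNormedType.Exports.
Local Open Scope classical_set_scope.
Local Open Scope ring_scope.

Section LearningDefs.
Variables (R : realType) (n : nat).

Definition vecR := 'I_n -> R.

Definition in_simplex (x : vecR) : Prop :=
  (forall j, 0 <= x j) /\ \sum_(j < n) x j = 1.

Definition basis_vec (j : 'I_n) : vecR := fun i => (i == j)%:R.

Definition dotR (u v : vecR) : R := \sum_(j < n) u j * v j.

Definition conversion_function (f : vecR -> vecR) : Prop :=
  forall q, in_simplex (f q).

(* input p : [0,oo) -> R^n square integrable on bounded intervals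
   (values of p at negative times are irrelevant) *)
Definition sq_int_bounded (p : R -> vecR) : Prop :=
  forall t : R, 0 <= t -> forall j : 'I_n,
    measurable_fun `[0, t] (fun s => p s j) /\
    (lebesgue_measure).-integrable `[0, t] (fun s => ((p s j) ^+ 2)%:E).

Definition state (q0 : vecR) (p : R -> vecR) (t : R) : vecR :=
  fun j => q0 j + Rintegral lebesgue_measure `[0, t] (fun s => p s j).

Definition supply (f : vecR -> vecR) (xs : vecR) (q0 : vecR) (p : R -> vecR)
  (s : R) : R :=
  dotR (p s) (fun j => f (state q0 p s) j - xs j).

(* passive via storage function L (learning operator with shift xs).
   The inequality is required whenever the supply integral exists
   (it always does when f is Borel measurable). *)
Definition passive_via (f : vecR -> vecR) (xs : vecR) (L : vecR -> R) : Prop :=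
  forall (q0 : vecR) (p : R -> vecR), sq_int_bounded p ->
  forall t : R, 0 <= t ->
    (lebesgue_measure).-integrable `[0, t] (fun s => (supply f xs q0 p s)%:E) ->
    L (state q0 p t) <= L q0 + Rintegral lebesgue_measure `[0, t] (supply f xs q0 p).

Definition lossless_via (f : vecR -> vecR) (xs : vecR) (L : vecR -> R) : Prop :=
  forall (q0 : vecR) (p : R -> vecR), sq_int_bounded p ->
  forall t : R, 0 <= t ->
    (lebesgue_measure).-integrable `[0, t] (fun s => (supply f xs q0 p s)%:E) ->
    L (state q0 p t) = L q0 + Rintegral lebesgue_measure `[0, t] (supply f xs q0 p).

Definition bounded_below (L : vecR -> R) : Prop := exists m : R, forall q, m <= L q.

Definition finitely_passive_op (f : vecR -> vecR) (xs : vecR) : Prop :=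
  exists L, bounded_below L /\ passive_via f xs L.

Definition finitely_lossless_op (f : vecR -> vecR) (xs : vecR) : Prop :=
  exists L, bounded_below L /\ lossless_via f xs L.

Definition finitely_passive_dyn (f : vecR -> vecR) : Prop :=
  forall j : 'I_n, finitely_passive_op f (basis_vec j).

Definition finitely_lossless_dyn (f : vecR -> vecR) : Prop :=
  forall j : 'I_n, finitely_lossless_op f (basis_vec j).

End LearningDefs.

(** Since the weights of x* sum to one, the supply rate of the shift x* is the
    x*-weighted average of the supply rates of the pure shifts e_j. Hence the
    same average of bounded-below storage functions L_j is a bounded-below
    storage function for x*: its storage balance is the average of theirs, and
    nonnegative weights preserve both the inequality and the equality. The only
    analytic point is that supply rates of different shifts differ by
    <p, e_j - x*>, which is integrable on bounded intervals because a square
    integrable function is integrable on a set of finite measure. *)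
From mathcomp Require Import all_boot all_order all_algebra.
From mathcomp Require Import all_classical all_reals all_analysis.
From mathcomp Require Import ring lra measurable_realfun.
Set Implicit Arguments.
Unset Strict Implicit.
Unset Printing Implicit Defensive.

Import Order.TTheory GRing.Theory Num.Theory.
Import numFieldNormedType.Exports.
Local Open Scope classical_set_scope.
Local Open Scope ring_scope.

Section integrable_finite_measure.
Context d (T : measurableType d) (R : realType).
Variables (mu : {measure set T -> \bar R}) (D : set T).
Hypotheses (mD : measurable D) (muD : (mu D < +oo)%E).

Lemma integrable_cst_lty (k : R) : mu.-integrable D (EFin \o cst k).
Proof.
apply/integrableP; split; first exact/measurable_EFinP.
rewrite (eq_integral (cst `|k|%:E))// integral_cst//.
by rewrite lte_mul_pinfty.
Qed.

Lemma integrable_of_sqr (g : T -> R) : measurable_fun D g ->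
  mu.-integrable D (EFin \o (fun x => g x ^+ 2)) -> mu.-integrable D (EFin \o g).
Proof.
move=> mg g2; apply: (le_integrable mD _ _ (integrableD mD (integrable_cst_lty 1) g2)).
  exact/measurable_EFinP.
move=> x _; rewrite /= lee_fin (ger0_norm (addr_ge0 ler01 (sqr_ge0 _))).
rewrite -(real_normK (num_real (g x))).
by have := normr_ge0 (g x); nra.
Qed.

End integrable_finite_measure.

Section Rintegral_sum.
Context d (T : measurableType d) (R : realType).
Variables (mu : {measure set T -> \bar R}) (D : set T) (I : Type).
Variables (s : seq I) (h : I -> T -> R).
Hypotheses (mD : measurable D) (hi : forall i, mu.-integrable D (EFin \o h i)).

Lemma integrable_sumr : mu.-integrable D (EFin \o (fun x => \sum_(i <- s) h i x)).
Proof.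
apply: (eq_integrable mD _ _ _ (integrable_sum mD s (fun i _ => hi i))) => x _.
by rewrite /= sumEFin.
Qed.

Lemma Rintegral_sum :
  \int[mu]_(x in D) \sum_(i <- s) h i x = \sum_(i <- s) \int[mu]_(x in D) h i x.
Proof.
rewrite /Rintegral sum_fine; last by move=> i _; exact: integrable_fin_num (hi i).
by rewrite -integral_sum//; congr fine; apply: eq_integral => x _; rewrite sumEFin.
Qed.

End Rintegral_sum.

Section supply_rate.
Variables (R : realType) (n : nat) (f : vecR R n -> vecR R n).
Variables (q0 : vecR R n) (p : R -> vecR R n).

Lemma supply_shift (xs ys : vecR R n) s :
  supply f ys q0 p s = supply f xs q0 p s + dotR (p s) (fun i => xs i - ys i).
Proof. by rewrite /supply /dotR -big_split; apply: eq_bigr => i _ /=; ring. Qed.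

Lemma dotR_basis_vec (u : vecR R n) j : dotR u (@basis_vec R n j) = u j.
Proof.
rewrite /dotR (bigD1 j)//= /basis_vec eqxx mulr1 big1 ?addr0// => i /negPf ij.
by rewrite ij mulr0.
Qed.

Lemma supplyE (xs : vecR R n) s :
  supply f xs q0 p s = dotR (p s) (f (state q0 p s)) - dotR (p s) xs.
Proof. by rewrite /supply /dotR -sumrB; apply: eq_bigr => i _; rewrite mulrBr. Qed.

Lemma supply_convex (xs : vecR R n) s : \sum_(j < n) xs j = 1 ->
  supply f xs q0 p s = \sum_(j < n) xs j * supply f (@basis_vec R n j) q0 p s.
Proof.
move=> xs1; under [RHS]eq_bigr do rewrite supplyE dotR_basis_vec mulrBr.
rewrite sumrB -mulr_suml xs1 mul1r supplyE; congr (_ - _).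
by apply: eq_bigr => j _; rewrite mulrC.
Qed.

Variable t : R.
Hypotheses (hp : sq_int_bounded p) (t0 : 0 <= t).
Let mI : measurable (`[0, t] : set (measurableTypeR R)) := measurable_itv _.

Lemma integrable_input i :
  (@lebesgue_measure R).-integrable `[0, t] (EFin \o (fun s => p s i)).
Proof.
have [mp p2] := hp t0 i.
apply: integrable_of_sqr => //.
move: (lebesgue_measure_itv `[0, t]) => /= ->.
by case: ifP; rewrite -?EFinD ltry.
Qed.

Lemma integrable_supply_shift (xs ys : vecR R n) :
  (@lebesgue_measure R).-integrable `[0, t] (fun s => (supply f xs q0 p s)%:E) ->
  (@lebesgue_measure R).-integrable `[0, t] (fun s => (supply f ys q0 p s)%:E).
Proof.
move=> hxs; have hdot : (@lebesgue_measure R).-integrable `[0, t]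
    (EFin \o (fun s => dotR (p s) (fun i => xs i - ys i))).
  apply: integrable_sumr => // i.
  apply: (eq_integrable mI _ _ _ (integrableZr mI (xs i - ys i) (integrable_input i))).
  by move=> s _; rewrite /= EFinM.
apply: (eq_integrable mI _ _ _ (integrableD mI hxs hdot)) => s _.
by rewrite (supply_shift xs ys).
Qed.

Lemma Rintegral_supply_convex (xs : vecR R n) : \sum_(j < n) xs j = 1 ->
  (@lebesgue_measure R).-integrable `[0, t] (fun s => (supply f xs q0 p s)%:E) ->
  Rintegral lebesgue_measure `[0, t] (supply f xs q0 p) =
  \sum_(j < n) xs j * Rintegral lebesgue_measure `[0, t]
                        (supply f (@basis_vec R n j) q0 p).
Proof.
move=> xs1 hxs; have hj j := integrable_supply_shift (@basis_vec R n j) hxs.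
have -> : supply f xs q0 p =
    fun s => \sum_(j < n) xs j * supply f (@basis_vec R n j) q0 p s.
  by apply/funext => s; exact: supply_convex.
rewrite Rintegral_sum//; first by apply: eq_bigr => j _; rewrite RintegralZl//; exact: hj.
move=> j; apply: (eq_integrable mI _ _ _ (integrableZl mI (xs j) (hj j))) => s _.
by rewrite /= EFinM.
Qed.

End supply_rate.

Section convex_storage.
Variables (R : realType) (n : nat) (f : vecR R n -> vecR R n).
Variables (xs : vecR R n) (L : 'I_n -> vecR R n -> R).
Hypothesis xs_simplex : in_simplex xs.

Let Lxs q := \sum_(j < n) xs j * L j q.

Lemma bounded_below_convex :
  (forall j, bounded_below (L j)) -> bounded_below Lxs.
Proof.
move=> /choice[m Lm]; exists (\sum_(j < n) xs j * m j) => q.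
by apply: ler_sum => j _; rewrite ler_wpM2l ?Lm //; case: xs_simplex.
Qed.

Lemma storage_balance_convex q0 p t : sq_int_bounded p -> 0 <= t ->
  (@lebesgue_measure R).-integrable `[0, t] (fun s => (supply f xs q0 p s)%:E) ->
  Lxs (state q0 p t) - (Lxs q0 + Rintegral lebesgue_measure `[0, t] (supply f xs q0 p))
  = \sum_(j < n) xs j * (L j (state q0 p t) - (L j q0 +
      Rintegral lebesgue_measure `[0, t] (supply f (@basis_vec R n j) q0 p))).
Proof.
move=> hp t0 hxs; have [_ xs1] := xs_simplex.
rewrite (Rintegral_supply_convex hp t0 xs1 hxs) /Lxs -!big_split -sumrB.
by apply: eq_bigr => j _; rewrite mulrBr mulrDr.
Qed.

Lemma passive_via_convex :
  (forall j, passive_via f (@basis_vec R n j) (L j)) -> passive_via f xs Lxs.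
Proof.
move=> hL q0 p hp t t0 hxs; have [xs0 _] := xs_simplex.
rewrite -subr_le0 storage_balance_convex//; apply: sumr_le0 => j _.
rewrite mulr_ge0_le0// subr_le0; apply: hL => //.
exact: integrable_supply_shift hxs.
Qed.

Lemma lossless_via_convex :
  (forall j, lossless_via f (@basis_vec R n j) (L j)) -> lossless_via f xs Lxs.
Proof.
move=> hL q0 p hp t t0 hxs; apply/eqP; rewrite -subr_eq0.
rewrite storage_balance_convex//; apply/eqP/big1 => j _.
by rewrite (hL j) ?subrr ?mulr0//; exact: integrable_supply_shift hxs.
Qed.

End convex_storage.

Theorem proposition3p6 (R : realType) (n : nat) (f : vecR R n -> vecR R n) :
  conversion_function f ->
  (finitely_passive_dyn f ->
     forall xs : vecR R n, in_simplex xs -> finitely_passive_op f xs) /\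
  (finitely_lossless_dyn f ->
     forall xs : vecR R n, in_simplex xs -> finitely_lossless_op f xs).
Proof.
(* Only the shifts matter: that [f] takes values in the simplex is not used. *)
move=> _; split=> [/choice[L hL]|/choice[L hL]] xs xs_simplex;
  exists (fun q => \sum_(j < n) xs j * L j q); split.
- exact: bounded_below_convex (fun j => (hL j).1).
- exact: passive_via_convex (fun j => (hL j).2).
- exact: bounded_below_convex (fun j => (hL j).1).
- exact: lossless_via_convex (fun j => (hL j).2).
Qed.
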